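(* Let $\rho=\eta[r,\alpha]$ be a qubit state with $r\ne g$. For every code $\tilde{\mathcal C}=\{(p_j,\eta[s_j,\beta_j])\}\in\mathscr C(\rho)$, the paired code $\mathcal C=\{(p_j/2,\eta[s_j,\beta_j]),(p_j/2,\eta[s_j,-\beta_j])\}$ also lies in $\mathscr C(\rho)$ and satisfies $\chi(\mathcal C)\ge\chi(\tilde{\mathcal C})$. Consequently, $I_{\mathrm{th}}(\rho)$ equals the supremum of $\chi$ over codes of the form $\{(p_j/2,\eta[s_j,\pm\kappa_{s_j}e^{i\phi_j}])\}$ with $s_j\in J$, $\phi_j\in\mathbb R$ and $(p_j)$ a probability vector.
   Context: Qubit memory with Hamiltonian $E_0|0\rangle\langle0|+E_1|1\rangle\langle1|$ at temperature $T$; $\lambda=e^{-(E_1-E_0)/k_{\mathrm B}T}$, $g=1/(1+\lambda)$ (the ground population of the Gibbs state). $\eta[r,\alpha]$ denotes the density matrix $\begin{pmatrix} r&\alpha\\ \alpha^*&1-r\end{pmatrix}$ in the energy basis. $J$ is the closed interval with endpoints $r$ and $1-\lambda r$. The set of states reachable from $\rho$ by thermal operations is $\vartheta(\rho)=\{\eta[s,\beta]: s\in J,\ |\beta|\le\kappa_s\}$ with $\kappa_s=|\alpha|\frac{\sqrt{(\lambda s+r-1)(\lambda r+s-1)}}{|(\lambda+1)r-1|}$. A code is a finite ensemble $\{(p_k,\sigma^{(k)})\}$; $\chi=S(\sum_kp_k\sigma^{(k)})-\sum_kp_kS(\sigma^{(k)})$ (von Neumann entropy, base 2); $\mathscr C(\rho)$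 is the set of codes with codewords in $\vartheta(\rho)$; $I_{\mathrm{th}}(\rho)=\sup_{\mathcal C\in\mathscr C(\rho)}\chi(\mathcal C)$. *)

From Stdlib Require Import Reals Lra List.
Import ListNotations.
Open Scope R_scope.

Definition Cx : Type := (R * R)%type.
Definition Cnorm (z : Cx) : R := sqrt (fst z * fst z + snd z * snd z).
Definition Copp (z : Cx) : Cx := (- fst z, - snd z).
Definition Cadd (z w : Cx) : Cx := (fst z + fst w, snd z + snd w).
Definition Cscal (a : R) (z : Cx) : Cx := (a * fst z, a * snd z).
Definition Cpolar (k phi : R) : Cx := (k * cos phi, k * sin phi).

(* lambda = exp(-(E1-E0)/(k_B T)), passing kT := k_B T *)
Definition lam (E0 E1 kT : R) : R := exp (- (E1 - E0) / kT).
Definition gibbs_g (l : R) : R := 1 / (1 + l).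

(* eta[r,alpha] is represented by the pair (r, alpha).  A state is valid
   (positive semidefinite, trace one) iff 0 <= r <= 1 and |alpha|^2 <= r(1-r). *)
Definition is_state (r : R) (a : Cx) : Prop :=
  0 <= r <= 1 /\ Cnorm a * Cnorm a <= r * (1 - r).

Definition inJ (l r s : R) : Prop :=
  Rmin r (1 - l * r) <= s <= Rmax r (1 - l * r).

Definition kappa (l r : R) (a : Cx) (s : R) : R :=
  Cnorm a * sqrt ((l * s + r - 1) * (l * r + s - 1)) / Rabs ((l + 1) * r - 1).

(* theta(rho): states reachable by thermal operations *)
Definition reachable (l r : R) (a : Cx) (s : R) (b : Cx) : Prop :=
  inJ l r s /\ Cnorm b <= kappa l r a s.

(* von Neumann entropy (base 2) of eta[s,beta], computed from its two
   eigenvalues (1 +- sqrt((2s-1)^2 + 4|beta|^2))/2, with 0 log 0 = 0. *)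
Definition log2 (x : R) : R := ln x / ln 2.
Definition etaf (x : R) : R := if Rlt_dec 0 x then - x * log2 x else 0.
Definition vN (s : R) (b : Cx) : R :=
  let d := sqrt ((2 * s - 1) ^ 2 + 4 * (Cnorm b * Cnorm b)) in
  etaf ((1 + d) / 2) + etaf ((1 - d) / 2).

(* A code: finite list of (p_k, (s_k, beta_k)) meaning (p_k, eta[s_k,beta_k]). *)
Definition code : Type := list (R * (R * Cx)).

Definition prob_sum (c : code) : R := fold_right (fun x acc => fst x + acc) 0 c.
Definition is_prob (c : code) : Prop :=
  Forall (fun x => 0 <= fst x) c /\ prob_sum c = 1.

(* average state sum_k p_k sigma^(k) = eta[sum p s, sum p beta] *)
Definition avg_s (c : code) : R :=
  fold_right (fun x acc => fst x * fst (snd x) + acc) 0 c.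
Definition avg_b (c : code) : Cx :=
  fold_right (fun x acc => Cadd (Cscal (fst x) (snd (snd x))) acc) (0, 0) c.

Definition chi (c : code) : R :=
  vN (avg_s c) (avg_b c)
  - fold_right (fun x acc => fst x * vN (fst (snd x)) (snd (snd x)) + acc) 0 c.

Definition in_codes (l r : R) (a : Cx) (c : code) : Prop :=
  is_prob c /\ Forall (fun x => reachable l r a (fst (snd x)) (snd (snd x))) c.

Definition paired (c : code) : code :=
  flat_map (fun x => [ (fst x / 2, (fst (snd x), snd (snd x)));
                       (fst x / 2, (fst (snd x), Copp (snd (snd x)))) ]) c.

Definition extremal_code (l r : R) (a : Cx) (d : list (R * (R * R))) : code :=
  flat_map (fun x =>
    let p := fst x in let s := fst (snd x) in let phi := snd (snd x) in
    [ (p / 2, (s, Cpolar (kappa l r a s) phi));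
      (p / 2, (s, Copp (Cpolar (kappa l r a s) phi))) ]) d.

Definition extremal_data_ok (l r : R) (d : list (R * (R * R))) : Prop :=
  Forall (fun x => 0 <= fst x) d /\
  fold_right (fun x acc => fst x + acc) 0 d = 1 /\
  Forall (fun x => inJ l r (fst (snd x))) d.

From Stdlib Require Import Reals List Lra.
From Coquelicot Require Import Coquelicot.
Open Scope R_scope.

(* The entropy of eta[s,beta] depends on beta only through |beta| and does not
   increase with it: the larger eigenvalue (1 + d)/2 grows with |beta|, and the
   binary entropy decreases on [1/2, 1].  Replacing each codeword by the pair
   beta, -beta keeps the average population and every codeword entropy but
   cancels the average coherence, so chi can only grow.  Afterwards raising
   every |beta_j| to kappa_{s_j} lowers the codeword entropies and leaves the
   average state eta[sum p s, 0] unchanged, so chi grows again.  Hence every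
   value of chi on codes in C(rho) is dominated by a value on extremal paired
   codes, and the two families have the same suprema. *)

Lemma ln2_pos : 0 < ln 2.
Proof. pose proof ln_lt_2; lra. Qed.

Lemma etaf_nonpos x : x <= 0 -> etaf x = 0.
Proof. intros Hx. unfold etaf. destruct (Rlt_dec 0 x); lra. Qed.

Lemma etaf_pos x : 0 < x -> etaf x = - x * ln x / ln 2.
Proof.
  intros Hx. unfold etaf, log2. destruct (Rlt_dec 0 x); [|lra].
  unfold Rdiv. ring.
Qed.

Lemma etaf_ge0 x : x <= 1 -> 0 <= etaf x.
Proof.
  intros Hx. destruct (Rle_lt_dec x 0) as [Hx0|Hx0].
  - rewrite etaf_nonpos by lra. lra.
  - rewrite etaf_pos by lra.
    assert (ln x <= 0) by (rewrite <- ln_1; apply ln_le; lra).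
    apply Rdiv_le_0_compat; [|exact ln2_pos].
    rewrite Ropp_mult_distr_l_reverse. apply Ropp_0_ge_le_contravar.
    apply Rle_ge, Rmult_le_0_l; lra.
Qed.

Lemma etaf_le0 x : 1 <= x -> etaf x <= 0.
Proof.
  intros Hx. rewrite etaf_pos by lra.
  assert (0 <= ln x) by (rewrite <- ln_1; apply ln_le; lra).
  assert (0 <= x * ln x) by (apply Rmult_le_pos; lra).
  unfold Rdiv. pose proof (Rinv_0_lt_compat _ ln2_pos). nra.
Qed.

Lemma binary_entropy_derive t : 0 < t < 1 ->
  derivable_pt_lim (fun u => - u * ln u - (1 - u) * ln (1 - u)) t
    (ln (1 - t) - ln t).
Proof.
  intros Ht. apply is_derive_Reals. auto_derive.
  - lra.
  - replace (1 + - t) with (1 - t) by ring.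
    change RinvImpl.Rinv with Rinv. field. lra.
Qed.

Lemma binary_entropy_antitone x y : 1 / 2 <= x -> x <= y -> y < 1 ->
  - y * ln y - (1 - y) * ln (1 - y) <= - x * ln x - (1 - x) * ln (1 - x).
Proof.
  intros Hx Hxy Hy. destruct (Req_dec x y) as [<-|Hne]; [lra|].
  destruct (MVT_cor2 (fun u => - u * ln u - (1 - u) * ln (1 - u))
              (fun u => ln (1 - u) - ln u) x y) as [t [Hdiff Ht]]; [lra| |].
  - intros t Ht. apply binary_entropy_derive. lra.
  - simpl in Hdiff.
    assert (Hslope : ln (1 - t) <= ln t) by (apply ln_le; lra).
    assert ((ln (1 - t) - ln t) * (y - x) <= 0) by nra.
    lra.
Qed.

(* Beyond 1 the term etaf (1 - x) is the junk value 0 and etaf x is negative. *)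
Lemma etaf_pair_antitone x y : 1 / 2 <= x -> x <= y ->
  etaf y + etaf (1 - y) <= etaf x + etaf (1 - x).
Proof.
  intros Hx Hxy. pose proof (Rinv_0_lt_compat _ ln2_pos) as Hinv.
  destruct (Rle_lt_dec 1 x) as [Hx1|Hx1].
  - rewrite !(etaf_nonpos (1 - _)) by lra. rewrite !etaf_pos by lra.
    assert (0 <= ln x) by (rewrite <- ln_1; apply ln_le; lra).
    assert (ln x <= ln y) by (apply ln_le; lra).
    assert (x * ln x <= y * ln y) by nra.
    unfold Rdiv. nra.
  - destruct (Rle_lt_dec 1 y) as [Hy1|Hy1].
    + rewrite (etaf_nonpos (1 - y)) by lra.
      pose proof (etaf_le0 y Hy1).
      pose proof (etaf_ge0 x ltac:(lra)).
      pose proof (etaf_ge0 (1 - x) ltac:(lra)).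
      lra.
    + rewrite !etaf_pos by lra.
      pose proof (binary_entropy_antitone x y Hx Hxy Hy1).
      unfold Rdiv. nra.
Qed.

Lemma Cnorm_ge0 b : 0 <= Cnorm b.
Proof. apply sqrt_pos. Qed.

Lemma Cnorm_0 : Cnorm (0, 0) = 0.
Proof. unfold Cnorm. simpl. rewrite Rmult_0_l, Rplus_0_l. apply sqrt_0. Qed.

Lemma Cnorm_Copp b : Cnorm (Copp b) = Cnorm b.
Proof. unfold Cnorm, Copp. simpl. f_equal. ring. Qed.

Lemma Cnorm_Cpolar k phi : 0 <= k -> Cnorm (Cpolar k phi) = k.
Proof.
  intros Hk. unfold Cnorm, Cpolar. simpl.
  replace (k * cos phi * (k * cos phi) + k * sin phi * (k * sin phi))
    with (k * k * (Rsqr (sin phi) + Rsqr (cos phi))) by (unfold Rsqr; ring).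
  rewrite sin2_cos2, Rmult_1_r. apply sqrt_square. exact Hk.
Qed.

Lemma vN_Copp s b : vN s (Copp b) = vN s b.
Proof. unfold vN. rewrite Cnorm_Copp. reflexivity. Qed.

Lemma vN_antitone s b1 b2 : Cnorm b1 <= Cnorm b2 -> vN s b2 <= vN s b1.
Proof.
  intros Hb. unfold vN. pose proof (Cnorm_ge0 b1).
  set (d1 := sqrt ((2 * s - 1) ^ 2 + 4 * (Cnorm b1 * Cnorm b1))).
  set (d2 := sqrt ((2 * s - 1) ^ 2 + 4 * (Cnorm b2 * Cnorm b2))).
  assert (Hd : d1 <= d2) by (apply sqrt_le_1_alt; nra).
  assert (0 <= d1) by apply sqrt_pos.
  replace ((1 - d1) / 2) with (1 - (1 + d1) / 2) by field.
  replace ((1 - d2) / 2) with (1 - (1 + d2) / 2) by field.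
  apply etaf_pair_antitone; lra.
Qed.

(* [Rabs (...) = 0] exactly when r = g; division by 0 then gives kappa = 0. *)
Lemma kappa_ge0 l r a s : 0 <= kappa l r a s.
Proof.
  unfold kappa. pose proof (Cnorm_ge0 a).
  pose proof (sqrt_pos ((l * s + r - 1) * (l * r + s - 1))).
  destruct (Req_dec (Rabs ((l + 1) * r - 1)) 0) as [E|E].
  - rewrite E. unfold Rdiv. rewrite Rinv_0. lra.
  - apply Rdiv_le_0_compat; [nra|]. pose proof (Rabs_pos ((l + 1) * r - 1)). lra.
Qed.

Definition avg_entropy (c : code) : R :=
  fold_right (fun x acc => fst x * vN (fst (snd x)) (snd (snd x)) + acc) 0 c.

Lemma chiE c : chi c = vN (avg_s c) (avg_b c) - avg_entropy c.
Proof. reflexivity. Qed.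

Lemma avg_b_paired c : avg_b (paired c) = (0, 0).
Proof.
  induction c as [|x c IH]; [reflexivity|].
  simpl. change (flat_map _ c) with (paired c). rewrite IH.
  unfold Cadd, Cscal, Copp. simpl. f_equal; field.
Qed.

Lemma avg_s_paired c : avg_s (paired c) = avg_s c.
Proof.
  induction c as [|x c IH]; [reflexivity|].
  simpl. change (flat_map _ c) with (paired c). rewrite IH. field.
Qed.

Lemma prob_sum_paired c : prob_sum (paired c) = prob_sum c.
Proof.
  induction c as [|x c IH]; [reflexivity|].
  simpl. change (flat_map _ c) with (paired c). rewrite IH. field.
Qed.

Lemma avg_entropy_paired c : avg_entropy (paired c) = avg_entropy c.
Proof.
  induction c as [|x c IH]; [reflexivity|].
  simpl. change (flat_map _ c) with (paired c).
  change (fold_right _ 0 (paired c)) with (avg_entropy (paired c)).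
  change (fold_right _ 0 c) with (avg_entropy c).
  rewrite IH, vN_Copp. field.
Qed.

Lemma chi_paired c : chi (paired c) = vN (avg_s c) (0, 0) - avg_entropy c.
Proof. rewrite chiE, avg_b_paired, avg_s_paired, avg_entropy_paired. reflexivity. Qed.

Lemma chi_le_chi_paired c : chi c <= chi (paired c).
Proof.
  rewrite chi_paired, chiE.
  assert (vN (avg_s c) (avg_b c) <= vN (avg_s c) (0, 0)).
  { apply vN_antitone. rewrite Cnorm_0. apply Cnorm_ge0. }
  lra.
Qed.

Lemma in_codes_paired l r a c : in_codes l r a c -> in_codes l r a (paired c).
Proof.
  intros [[Hp Hsum] Hreach]. split; [split|].
  - clear Hsum Hreach. induction Hp as [|x c Hx _ IH]; simpl; [constructor|].
    constructor; [simpl; lra|]. constructor; [simpl; lra|]. exact IH.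
  - rewrite prob_sum_paired. exact Hsum.
  - clear Hp Hsum. induction Hreach as [|x c [HJ Hk] _ IH]; simpl; [constructor|].
    constructor; [split; assumption|].
    constructor; [|exact IH]. split; [assumption|]. simpl. rewrite Cnorm_Copp. exact Hk.
Qed.

Definition saturated_code (l r : R) (a : Cx) (d : list (R * (R * R))) : code :=
  map (fun x => (fst x, (fst (snd x), Cpolar (kappa l r a (fst (snd x))) (snd (snd x))))) d.

Lemma extremal_codeE l r a d : extremal_code l r a d = paired (saturated_code l r a d).
Proof. induction d as [|x d IH]; [reflexivity|]. simpl. rewrite IH. reflexivity. Qed.

Lemma in_codes_saturated_code l r a d :
  extremal_data_ok l r d -> in_codes l r a (saturated_code l r a d).
Proof.
  intros [Hp [Hsum HJ]]. split; [split|].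
  - clear Hsum HJ. induction Hp; simpl; constructor; auto.
  - rewrite <- Hsum. clear. induction d as [|x d IH]; simpl; [reflexivity|]. rewrite IH. reflexivity.
  - clear Hp Hsum. induction HJ; simpl; constructor; auto.
    split; [assumption|]. simpl. rewrite Cnorm_Cpolar by apply kappa_ge0. lra.
Qed.

Lemma in_codes_extremal_code l r a d :
  extremal_data_ok l r d -> in_codes l r a (extremal_code l r a d).
Proof.
  intros Hd. rewrite extremal_codeE. apply in_codes_paired.
  apply in_codes_saturated_code, Hd.
Qed.

(* The phases are irrelevant for chi; we take them all equal to 0. *)
Definition code_data (c : code) : list (R * (R * R)) :=
  map (fun x => (fst x, (fst (snd x), 0))) c.

Lemma extremal_data_ok_code_data l r a c :
  in_codes l r a c -> extremal_data_ok l r (code_data c).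
Proof.
  intros [[Hp Hsum] Hreach]. split; [|split].
  - clear Hsum Hreach. induction Hp; simpl; constructor; auto.
  - rewrite <- Hsum. clear. induction c as [|x c IH]; simpl; [reflexivity|]. rewrite IH. reflexivity.
  - clear Hp Hsum. induction Hreach as [|x c Hx]; simpl; constructor; auto. apply Hx.
Qed.

Lemma avg_s_saturated_code l r a c :
  avg_s (saturated_code l r a (code_data c)) = avg_s c.
Proof. induction c as [|x c IH]; simpl; [reflexivity|]. rewrite IH. reflexivity. Qed.

Lemma avg_entropy_saturated_code_le l r a c : in_codes l r a c ->
  avg_entropy (saturated_code l r a (code_data c)) <= avg_entropy c.
Proof.
  intros [[Hp _] Hreach]. induction c as [|x c IH]; simpl; [lra|].
  inversion Hp as [|? ? Hx Hp']; subst. inversion Hreach as [|? ? [_ Hk] Hreach']; subst.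
  change (fold_right _ 0 (map _ (map _ c)))
    with (avg_entropy (saturated_code l r a (code_data c))).
  change (fold_right _ 0 c) with (avg_entropy c).
  specialize (IH Hp' Hreach').
  assert (vN (fst (snd x)) (Cpolar (kappa l r a (fst (snd x))) 0)
          <= vN (fst (snd x)) (snd (snd x))).
  { apply vN_antitone. rewrite Cnorm_Cpolar by apply kappa_ge0. exact Hk. }
  simpl. nra.
Qed.

Lemma chi_le_chi_extremal_code l r a c : in_codes l r a c ->
  chi c <= chi (extremal_code l r a (code_data c)).
Proof.
  intros Hc. pose proof (chi_le_chi_paired c) as Hpaired.
  pose proof (avg_entropy_saturated_code_le l r a c Hc).
  rewrite extremal_codeE, !chi_paired, avg_s_saturated_code.
  rewrite chi_paired in Hpaired. lra.
Qed.

Lemma is_lub_cofinal (A B : R -> Prop) (I : R) :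
  (forall x, B x -> A x) -> (forall x, A x -> exists y, B y /\ x <= y) ->
  is_lub A I <-> is_lub B I.
Proof.
  intros HBA HAB.
  assert (Hub : forall u, is_upper_bound A u <-> is_upper_bound B u).
  { intros u. split; intros Hu x Hx.
    - apply Hu, HBA, Hx.
    - destruct (HAB x Hx) as [y [Hy Hxy]]. apply Rle_trans with y; [exact Hxy|].
      apply Hu, Hy. }
  unfold is_lub. split; intros [Hup Hleast]; split;
    try (apply Hub; exact Hup); intros u Hu; apply Hleast, Hub, Hu.
Qed.

Theorem lemmaS1 (E0 E1 kT r : R) (a : Cx) :
  0 < kT ->
  is_state r a ->
  r <> gibbs_g (lam E0 E1 kT) ->
  (forall c : code, in_codes (lam E0 E1 kT) r a c ->
     in_codes (lam E0 E1 kT) r a (paired c) /\ chi (paired c) >= chi c)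
  /\
  (forall I : R,
     is_lub (fun x => exists c : code, in_codes (lam E0 E1 kT) r a c /\ x = chi c) I
     <->
     is_lub (fun x => exists d : list (R * (R * R)),
                extremal_data_ok (lam E0 E1 kT) r d /\
                x = chi (extremal_code (lam E0 E1 kT) r a d)) I).
Proof.
  intros _ _ _. set (l := lam E0 E1 kT). split.
  - intros c Hc. split.
    + apply in_codes_paired, Hc.
    + apply Rle_ge, chi_le_chi_paired.
  - intros I. apply is_lub_cofinal.
    + intros x [d [Hd ->]]. exists (extremal_code l r a d).
      split; [apply in_codes_extremal_code, Hd | reflexivity].
    + intros x [c [Hc ->]]. exists (chi (extremal_code l r a (code_data c))). split.
      * exists (code_data c). split; [exact (extremal_data_ok_code_data l r a c Hc) | reflexivity].
      * apply chi_le_chi_extremal_code, Hc.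
Qed.
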